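(* Consider the system $x_{t+1}=Ax_t+Bu_t+v_t$ with i.i.d. disturbances from a distribution $\mathcal{D}$ on $\mathbb{R}^n$, positive definite $Q,R$, $\gamma\in(0,1)$ and a feedback gain $K$ with $A_K=A+BK$. Let $P$ solve $P=Q+K^{\rm T}RK+\gamma A_K^{\rm T}PA_K$ and for $x\in\mathbb{R}^n$ let $$G^{K}(x)=x^{\rm T}Px+2\sum_{k=0}^{\infty}\gamma^{k+1}w_k^{\rm T}PA_K^{k+1}x+\sum_{k=0}^{\infty}\gamma^{k+1}w_k^{\rm T}Pw_k+2\sum_{k=1}^{\infty}\gamma^{k+1}w_k^{\rm T}P\sum_{\tau=0}^{k-1}A_K^{k-\tau}w_\tau,$$ with $w_k\sim\mathcal{D}$ mutually independent. Assume $\mathbb{E}[w_k]=0$ and $\mathbb{E}[\|w_k\|^4]\le\sigma_4^4$ for all $k\in\mathbb{N}$, and that $K$ is stabilizing with $\|A_K\|=\rho_K<1$ (spectral norm). Then the variance of $G^K(x)$ is bounded (finite).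
   Context: $\|\cdot\|$ denotes the Euclidean norm for vectors and the spectral norm for matrices. *)

From HB Require Import structures.
From mathcomp Require Import all_boot all_order all_algebra.
From mathcomp Require Import all_classical all_reals all_analysis.
Set Implicit Arguments. Unset Strict Implicit. Unset Printing Implicit Defensive.
Import Order.TTheory GRing.Theory Num.Theory.
Import numFieldNormedType.Exports.
Local Open Scope classical_set_scope.
Local Open Scope ring_scope.

Section defs.
Variable R : realType.

Definition scal (M : 'M[R]_1) : R := M 0 0.

Definition vnorm n (v : 'cV[R]_n) : R := Num.sqrt (\sum_(i < n) v i 0 ^+ 2).

Definition specnorm m n (M : 'M[R]_(m, n)) : R :=
  sup [set vnorm (M *m x) | x in [set x : 'cV[R]_n | vnorm x <= 1]].

Definition posdef n (M : 'M[R]_n) : Prop :=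
  M^T = M /\ forall x : 'cV[R]_n, x != 0 -> 0 < scal (x^T *m M *m x).

(* coordinates of a column vector, as an element of the measurable space R^n *)
Definition cv2tuple n (v : 'cV[R]_n) : n.-tuple R := [tuple v i 0 | i < n].

Definition series_sum (u : nat -> R) : R := limn (fun N => \sum_(0 <= k < N) u k).
Definition series_sum1 (u : nat -> R) : R := limn (fun N => \sum_(1 <= k < N) u k).

Definition GK n (AK P : 'M[R]_n) (gamma : R) (x : 'cV[R]_n)
    (w : nat -> 'cV[R]_n) : R :=
  scal (x^T *m P *m x)
  + 2 * series_sum (fun k => gamma ^+ k.+1 * scal ((w k)^T *m P *m (AK ^+ k.+1 *m x)))
  + series_sum (fun k => gamma ^+ k.+1 * scal ((w k)^T *m P *m w k))
  + 2 * series_sum1 (fun k => gamma ^+ k.+1 *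
          scal ((w k)^T *m P *m (\sum_(0 <= tau < k) AK ^+ (k - tau) *m w tau))).
End defs.

Section prob.
Local Open Scope ereal_scope.
Context d (T : measurableType d) (R : realType) (Pr : probability T R).

Definition mutually_independent n (w : nat -> T -> 'cV[R]_n) : Prop :=
  forall (s : seq nat) (B : nat -> set (n.-tuple R)),
    uniq s -> (forall k, measurable (B k)) ->
    Pr (\big[setI/setT]_(k <- s) ((@cv2tuple R n \o w k) @^-1` B k))
    = \prod_(k <- s) Pr ((@cv2tuple R n \o w k) @^-1` B k).
End prob.

From HB Require Import structures.
From mathcomp Require Import all_boot all_order all_algebra.
From mathcomp Require Import all_classical all_reals all_analysis.
From mathcomp Require Import measurable_realfun.
From mathcomp.algebra_tactics Require Import ring lra.
Import Order.TTheory GRing.Theory Num.Theory.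
Import numFieldNormedType.Exports.
Local Open Scope classical_set_scope.
Local Open Scope ring_scope.
Set Implicit Arguments. Unset Strict Implicit. Unset Printing Implicit Defensive.

(* Up to a constant, G^K is a sum of three series whose k-th terms u_k satisfy
   u_k^2 <= gamma^(2(k+1)) Z_k for random variables Z_k with uniformly bounded
   expectation; this comes from the fourth-moment bound on the w_k and from
   ||A_K|| < 1.  Cauchy-Schwarz with weights gamma^(k+1) bounds the square of each
   series pointwise by (1 - gamma)^-1 * sum_k gamma^(k+1) Z_k, whose expectation
   is finite; so G^K is square integrable and its variance is finite. *)

Section real_inequalities.
Variable R : realType.

Lemma sqr_ler_norm (x y : R) : `|x| <= y -> x ^+ 2 <= y ^+ 2.
Proof.
move=> xy; rewrite -real_normK ?num_real // lerXn2r // nnegrE //.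
exact: le_trans xy.
Qed.

Lemma sqr_le_1DX4 (y : R) : y ^+ 2 <= 1 + y ^+ 4.
Proof. by rewrite -[4%N]/(2 * 2)%N exprM; set z := y ^+ 2; nra. Qed.

Lemma mul_sqr_le_1DX4 (a b : R) : a ^+ 2 * b ^+ 2 <= (1 + a ^+ 4) + (1 + b ^+ 4).
Proof.
rewrite -[4%N]/(2 * 2)%N !exprM.
have := sqr_ge0 a; have := sqr_ge0 b; set p := a ^+ 2; set q := b ^+ 2; nra.
Qed.

Lemma sum_sqr_le_sqr_sum (I : Type) (s : seq I) (a : I -> R) :
  (forall i, 0 <= a i) -> \sum_(i <- s) a i ^+ 2 <= (\sum_(i <- s) a i) ^+ 2.
Proof.
move=> a0; elim: s => [|x s IH]; first by rewrite !big_nil expr0n.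
rewrite !big_cons sqrrD -addrA lerD2l.
apply: (le_trans IH); rewrite lerDr; apply: mulrn_wge0; apply: mulr_ge0 => //.
exact: sumr_ge0.
Qed.

(* Cauchy-Schwarz for the vectors (sqrt (b i)) and (y i / sqrt (b i)); it is
   proved as the nonnegativity of the b-weighted variance of the y i / b i. *)
Lemma sqr_sum_le_weighted (I : Type) (r : seq I) (y b : I -> R) :
  (forall i, 0 < b i) ->
  (\sum_(i <- r) y i) ^+ 2 <= (\sum_(i <- r) b i) * \sum_(i <- r) y i ^+ 2 / b i.
Proof.
move=> b0; case: r => [|i0 s]; first by rewrite !big_nil expr0n mul0r.
set B := \sum_(i <- _) b i; set Y := \sum_(i <- _) y i.
set V := \sum_(i <- _) y i ^+ 2 / b i.
have Bp : 0 < B.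
  rewrite /B big_cons; apply: (lt_le_trans (b0 i0)); rewrite lerDl.
  by apply: sumr_ge0 => j _; exact: ltW.
set m := Y / B.
have var_ge0 : 0 <= \sum_(i <- i0 :: s) b i * (y i / b i - m) ^+ 2.
  by apply: sumr_ge0 => i _; apply: mulr_ge0; [exact: ltW|exact: sqr_ge0].
have varE : \sum_(i <- i0 :: s) b i * (y i / b i - m) ^+ 2
    = V - 2 * m * Y + m ^+ 2 * B.
  rewrite (eq_bigr (fun i => y i ^+ 2 / b i - 2 * m * y i + m ^+ 2 * b i)).
    by rewrite big_split /= sumrB -!mulr_sumr.
  by move=> i _; have bi := b0 i; field; rewrite gt_eqF.
rewrite {}/m in var_ge0 varE.
have : 0 <= B * (V - 2 * (Y / B) * Y + (Y / B) ^+ 2 * B).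
  by rewrite -varE; apply: mulr_ge0 => //; exact: ltW.
have -> : B * (V - 2 * (Y / B) * Y + (Y / B) ^+ 2 * B) = B * V - Y ^+ 2.
  by field; rewrite gt_eqF.
by rewrite subr_ge0.
Qed.

Lemma geom_partial_le (g : R) N : 0 <= g < 1 ->
  \sum_(0 <= k < N) g ^+ k.+1 <= (1 - g)^-1.
Proof.
case/andP => g0 g1; have g1' : 0 < 1 - g by rewrite subr_gt0.
rewrite -(ler_pM2l g1') mulfV ?gt_eqF //.
have -> : (1 - g) * \sum_(0 <= k < N) g ^+ k.+1 = g - g ^+ N.+1.
  elim: N => [|N IH]; first by rewrite big_geq // mulr0 expr1 subrr.
  rewrite big_nat_recr //= mulrDr IH (exprS g N.+1); set x := g ^+ N.+1; ring.
rewrite lerBlDr; apply: (le_trans (ltW g1)); rewrite lerDl; exact: exprn_ge0.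
Qed.

Lemma geom_partial_rev_le (r : R) k : 0 <= r < 1 ->
  \sum_(0 <= tau < k) r ^+ (k - tau) <= (1 - r)^-1.
Proof.
move=> r01; rewrite big_nat_rev /=.
rewrite (eq_big_nat _ _ (F2 := fun j => r ^+ j.+1)); first exact: geom_partial_le.
by move=> j /andP[_ jk]; rewrite add0n subKn.
Qed.

Lemma sqr_partial_sum_le (g : R) (u z : nat -> R) N : 0 < g < 1 ->
  (forall k, u k ^+ 2 <= (g ^+ k.+1) ^+ 2 * z k) ->
  (\sum_(0 <= k < N) u k) ^+ 2 <= (1 - g)^-1 * \sum_(0 <= k < N) g ^+ k.+1 * z k.
Proof.
move=> /andP[g0 g1] uz.
apply: (le_trans (sqr_sum_le_weighted _ _ (b := fun k => g ^+ k.+1) _)).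
  by move=> k; exact: exprn_gt0.
apply: ler_pM.
- by apply: sumr_ge0 => k _; exact: exprn_ge0 (ltW g0).
- apply: sumr_ge0 => k _; apply: divr_ge0; [exact: sqr_ge0|exact: exprn_ge0 (ltW g0)].
- by apply: geom_partial_le; rewrite ltW.
- apply: ler_sum => k _; rewrite ler_pdivrMr ?exprn_gt0 //.
  by rewrite mulrAC -expr2.
Qed.

End real_inequalities.

Section column_vectors.
Variable R : realType.

Lemma vnorm_ge0 n (v : 'cV[R]_n) : 0 <= vnorm v.
Proof. exact: sqrtr_ge0. Qed.

Lemma vnorm_sqr n (v : 'cV[R]_n) : vnorm v ^+ 2 = \sum_(i < n) v i 0 ^+ 2.
Proof. by rewrite sqr_sqrtr //; apply: sumr_ge0 => i _; exact: sqr_ge0. Qed.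

Lemma vnorm_X4 n (v : 'cV[R]_n) : vnorm v ^+ 4 = (\sum_(i < n) v i 0 ^+ 2) ^+ 2.
Proof. by rewrite -[4%N]/(2 * 2)%N exprM vnorm_sqr. Qed.

Lemma ler_coord_vnorm n (v : 'cV[R]_n) i : `|v i 0| <= vnorm v.
Proof.
rewrite -sqrtr_sqr ler_sqrt; last by apply: sumr_ge0 => j _; exact: sqr_ge0.
by rewrite (bigD1 i) //= lerDl; apply: sumr_ge0 => j _; exact: sqr_ge0.
Qed.

Lemma vnorm_le_l1 n (v : 'cV[R]_n) : vnorm v <= \sum_(i < n) `|v i 0|.
Proof.
rewrite /vnorm -(ger0_norm (sumr_ge0 _ (fun i _ => normr_ge0 (v i 0)))).
rewrite -sqrtr_sqr ler_sqrt ?sqr_ge0 //.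
under eq_bigr do rewrite -real_normK ?num_real //.
exact: sum_sqr_le_sqr_sum.
Qed.

Lemma vnormZ n (c : R) (v : 'cV[R]_n) : vnorm (c *: v) = `|c| * vnorm v.
Proof.
rewrite /vnorm (eq_bigr (fun i => c ^+ 2 * v i 0 ^+ 2)); last first.
  by move=> i _; rewrite mxE exprMn.
by rewrite -mulr_sumr sqrtrM ?sqr_ge0 // sqrtr_sqr.
Qed.

Lemma vnorm0 n : vnorm (0 : 'cV[R]_n) = 0.
Proof. by rewrite -(scale0r (0 : 'cV[R]_n)) vnormZ normr0 mul0r. Qed.

Lemma vnorm_eq0 n (v : 'cV[R]_n) : vnorm v = 0 -> v = 0.
Proof.
move=> v0; apply/matrixP => i j; rewrite ord1 mxE; apply/eqP.
by rewrite -normr_le0 -v0 ler_coord_vnorm.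
Qed.

Definition mxl1 m n (M : 'M[R]_(m, n)) : R := \sum_i \sum_j `|M i j|.

Lemma mxl1_ge0 m n (M : 'M[R]_(m, n)) : 0 <= mxl1 M.
Proof. by apply: sumr_ge0 => i _; apply: sumr_ge0. Qed.

Lemma vnorm_mulmx_le m n (M : 'M[R]_(m, n)) (v : 'cV[R]_n) :
  vnorm (M *m v) <= mxl1 M * vnorm v.
Proof.
apply: (le_trans (vnorm_le_l1 _)); rewrite /mxl1 mulr_suml.
apply: ler_sum => i _; rewrite mxE mulr_suml.
apply: (le_trans (ler_norm_sum _ _ _)); apply: ler_sum => j _.
by rewrite normrM ler_wpM2l // ler_coord_vnorm.
Qed.

Lemma scalE m n (u : 'cV[R]_m) (M : 'M[R]_(m, n)) (v : 'cV[R]_n) :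
  scal (u^T *m M *m v) = \sum_i \sum_j u i 0 * M i j * v j 0.
Proof.
rewrite /scal mxE exchange_big /=; apply: eq_bigr => j _; rewrite mxE mulr_suml.
by apply: eq_bigr => i _; rewrite mxE.
Qed.

Lemma norm_scal_le m n (u : 'cV[R]_m) (M : 'M[R]_(m, n)) (v : 'cV[R]_n) :
  `|scal (u^T *m M *m v)| <= mxl1 M * vnorm u * vnorm v.
Proof.
rewrite scalE /mxl1 !mulr_suml; apply: (le_trans (ler_norm_sum _ _ _)).
apply: ler_sum => i _; rewrite !mulr_suml.
apply: (le_trans (ler_norm_sum _ _ _)); apply: ler_sum => j _.
rewrite !normrM (mulrC `|u i 0|) -!mulrA ler_wpM2l //.
by rewrite ler_pM ?ler_coord_vnorm.
Qed.

Lemma scal_sumr m n (I : Type) (r : seq I) (u : 'cV[R]_m) (M : 'M[R]_(m, n))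
    (f : I -> 'cV[R]_n) :
  scal (u^T *m M *m \sum_(i <- r) f i) = \sum_(i <- r) scal (u^T *m M *m f i).
Proof. by rewrite mulmx_sumr /scal summxE. Qed.

Lemma specnorm_has_sup m n (M : 'M[R]_(m, n)) :
  has_sup [set vnorm (M *m x) | x in [set x : 'cV[R]_n | vnorm x <= 1]].
Proof.
split; first by exists 0, 0 => //=; rewrite ?mulmx0 vnorm0.
exists (mxl1 M) => _ [x /= x1 <-].
apply: (le_trans (vnorm_mulmx_le _ _)); rewrite -[leRHS]mulr1 ler_wpM2l //.
exact: mxl1_ge0.
Qed.

Lemma specnorm_ge0 m n (M : 'M[R]_(m, n)) : 0 <= specnorm M.
Proof.
apply: (le_trans _ (sup_upper_bound (specnorm_has_sup M) _)); first exact: lexx.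
by exists 0 => //=; rewrite ?mulmx0 vnorm0.
Qed.

Lemma vnorm_mulmx_specnorm m n (M : 'M[R]_(m, n)) (v : 'cV[R]_n) :
  vnorm (M *m v) <= specnorm M * vnorm v.
Proof.
have [v0|v0] := eqVneq (vnorm v) 0.
  by rewrite (vnorm_eq0 v0) mulmx0 !vnorm0 mulr0.
have vp : 0 < vnorm v by rewrite lt_neqAle eq_sym v0 vnorm_ge0.
have nv0 : 0 <= (vnorm v)^-1 by rewrite invr_ge0 vnorm_ge0.
rewrite -ler_pdivrMr //.
have -> : vnorm (M *m v) / vnorm v = vnorm (M *m ((vnorm v)^-1 *: v)).
  by rewrite -scalemxAr vnormZ ger0_norm // mulrC.
apply: (sup_upper_bound (specnorm_has_sup M)); exists ((vnorm v)^-1 *: v) => //=.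
by rewrite vnormZ ger0_norm // mulVf.
Qed.

Lemma vnorm_mulmxX_specnorm n (M : 'M[R]_n) (v : 'cV[R]_n) k :
  vnorm (M ^+ k *m v) <= specnorm M ^+ k * vnorm v.
Proof.
elim: k => [|k IH]; first by rewrite expr0 mul1mx expr0 mul1r.
rewrite exprS -mulmxE -mulmxA exprS -mulrA.
apply: (le_trans (vnorm_mulmx_specnorm _ _)); rewrite ler_wpM2l //.
exact: specnorm_ge0.
Qed.

(* The weights r ^+ (k - tau) are positive only because r > 0, which is why a
   bound r of the contraction rate, and not the rate itself, is used. *)
Lemma sqr_scal_conv_le n (AK P : 'M[R]_n) (r : R) (v : nat -> 'cV[R]_n) k :
  0 < r < 1 -> specnorm AK <= r ->
  scal ((v k)^T *m P *m \sum_(0 <= tau < k) AK ^+ (k - tau) *m v tau) ^+ 2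
  <= (1 - r)^-1 * mxl1 P ^+ 2 *
     \sum_(0 <= tau < k) r ^+ (k - tau) * (vnorm (v k) ^+ 2 * vnorm (v tau) ^+ 2).
Proof.
move=> /andP[r0 r1] rhor; rewrite scal_sumr.
pose y tau := mxl1 P * vnorm (v k) * (r ^+ (k - tau) * vnorm (v tau)).
have normy : `|\sum_(0 <= tau < k) scal ((v k)^T *m P *m (AK ^+ (k - tau) *m v tau))|
    <= \sum_(0 <= tau < k) y tau.
  apply: (le_trans (ler_norm_sum _ _ _)); apply: ler_sum => tau _.
  apply: (le_trans (norm_scal_le _ _ _)); apply: ler_wpM2l.
    by rewrite mulr_ge0 ?mxl1_ge0 ?vnorm_ge0.
  apply: (le_trans (vnorm_mulmxX_specnorm _ _ _)); rewrite ler_wpM2r ?vnorm_ge0 //.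
  by rewrite lerXn2r // nnegrE ?specnorm_ge0 // ltW.
apply: (le_trans (sqr_ler_norm normy)).
apply: (le_trans (sqr_sum_le_weighted _ _ (b := fun tau => r ^+ (k - tau)) _)).
  by move=> tau; exact: exprn_gt0.
rewrite -mulrA; apply: ler_pM.
- by apply: sumr_ge0 => tau _; exact: exprn_ge0 (ltW r0).
- by apply: sumr_ge0 => tau _; rewrite divr_ge0 ?sqr_ge0 // exprn_ge0 // ltW.
- by apply: geom_partial_rev_le; rewrite ltW.
rewrite mulr_sumr; apply: ler_sum => tau _.
have q0 : 0 < r ^+ (k - tau) by exact: exprn_gt0.
rewrite /y; set q := r ^+ (k - tau); set a := vnorm (v k); set b := vnorm (v tau).
suff -> : (mxl1 P * a * (q * b)) ^+ 2 / q = mxl1 P ^+ 2 * (q * (a ^+ 2 * b ^+ 2)) by [].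
by field; rewrite gt_eqF.
Qed.

End column_vectors.

Lemma cvgn_natSinvP (R : realType) (u : nat -> R) :
  cvgn u <-> forall j : nat, exists N, forall m, (N <= m)%N -> `|u N - u m| < j.+1%:R^-1.
Proof.
split.
  move=> cu j; have e0 : 0 < j.+1%:R^-1 / 2 :> R by rewrite divr_gt0 // invr_gt0.
  move/cvgrPdist_lt: cu => /(_ _ e0) [N _ HN].
  exists N => m Nm; rewrite (splitr (j.+1%:R^-1)).
  rewrite -(subrKA (limn u)); apply: (le_lt_trans (ler_normD _ _)).
  apply: ltrD; last exact: HN m Nm.
  by rewrite distrC; apply: HN N (leqnn N).
move=> H; apply/cauchy_cvgP; apply/cauchyP => e e0.
have [j _ Hj] := near_infty_natSinv_lt (PosNum e0).
have [N HN] := H j; exists (u N); exists N => // m /= Nm.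
rewrite -ball_normE /=; apply: (lt_trans (HN m Nm)); exact: Hj j (leqnn j).
Qed.

Section measurability.
Context d (T : measurableType d) (R : realType).

(* On the measurable set C where the sequence converges, limn is a pointwise
   limit; off C it is the junk value 0. *)
Lemma measurable_fun_limn (h : nat -> T -> R) :
  (forall N, measurable_fun [set: T] (h N)) ->
  measurable_fun [set: T] (fun t => limn (h ^~ t)).
Proof.
move=> mh.
pose C := \bigcap_j \bigcup_N \bigcap_(m in [set m | (N <= m)%N])
   ((fun t => h N t - h m t) @^-1` `]- (j.+1%:R^-1 : R), j.+1%:R^-1[).
have mC : measurable C.
  apply: bigcapT_measurable => j; apply: bigcup_measurable => N _.
  apply: bigcap_measurable; first by exists N => /=.
  move=> m _; rewrite -[X in measurable X]setTI.
  by apply: (measurable_funB (mh N) (mh m)) => //; exact: measurable_itv.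
have CE t : C t <-> cvgn (h ^~ t).
  rewrite cvgn_natSinvP; split.
    move=> Ct j; have [N _ HN] := Ct j Logic.I; exists N => m Nm.
    by have := HN m Nm; rewrite /= in_itv /= -ltr_norml.
  move=> H j _; have [N HN] := H j; exists N => // m Nm.
  by rewrite /= in_itv /= -ltr_norml; exact: HN.
rewrite -(setUv C) measurable_funU //; last exact: measurableC.
split.
  apply: (measurable_fun_cvg (h := h)); first by move=> m; exact: measurable_funS (mh m).
  by move=> t /CE.
apply: (eq_measurable_fun (fun _ => (0 : R))); last exact: measurable_cst.
by move=> t; rewrite inE => /= nC; rewrite dvgP // => /CE.
Qed.

Variable n : nat.

Definition measurable_coords (v : T -> 'cV[R]_n) :=
  forall i, measurable_fun [set: T] (fun t => v t i 0).

Lemma measurable_coords_tuple (v : T -> 'cV[R]_n) :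
  measurable_fun [set: T] (@cv2tuple R n \o v) -> measurable_coords v.
Proof.
move/measurable_fun_tnthP => mv i.
by apply: eq_measurable_fun (mv i) => t _ /=; rewrite tnth_mktuple.
Qed.

Lemma measurable_coords_cst (v : 'cV[R]_n) : measurable_coords (fun _ => v).
Proof. by move=> i; exact: measurable_cst. Qed.

Lemma measurable_coords_mulmx (M : 'M[R]_n) (v : T -> 'cV[R]_n) :
  measurable_coords v -> measurable_coords (fun t => M *m v t).
Proof.
move=> mv i; apply: (eq_measurable_fun (fun t => \sum_j M i j * v t j 0)).
  by move=> t _; rewrite mxE.
by apply: measurable_sum => j; apply: measurable_funM => //; exact: measurable_cst.
Qed.

Lemma measurable_coords_sum (I : Type) (r : seq I) (f : I -> T -> 'cV[R]_n) :
  (forall i, measurable_coords (f i)) -> measurable_coords (fun t => \sum_(i <- r) f i t).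
Proof.
move=> mf i; apply: (eq_measurable_fun (fun t => \sum_(k <- r) f k t i 0)).
  by move=> t _; rewrite summxE.
by apply: measurable_sum => k; exact: mf.
Qed.

Lemma measurable_scal (M : 'M[R]_n) (u v : T -> 'cV[R]_n) :
  measurable_coords u -> measurable_coords v ->
  measurable_fun [set: T] (fun t => scal ((u t)^T *m M *m v t)).
Proof.
move=> mu mv.
apply: (eq_measurable_fun (fun t => \sum_i \sum_j u t i 0 * M i j * v t j 0)).
  by move=> t _; rewrite scalE.
apply: measurable_sum => i; apply: measurable_sum => j.
by apply: measurable_funM => //; apply: measurable_funM => //; exact: measurable_cst.
Qed.

Lemma measurable_vnorm_X4 (v : T -> 'cV[R]_n) :
  measurable_coords v -> measurable_fun [set: T] (fun t => vnorm (v t) ^+ 4).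
Proof.
move=> mv; apply: (eq_measurable_fun (fun t => (\sum_i v t i 0 ^+ 2) ^+ 2)).
  by move=> t _; rewrite vnorm_X4.
by apply: measurable_funX; apply: measurable_sum => i; exact: measurable_funX.
Qed.

End measurability.

Lemma sqr_series_sum_le (R : realType) (g : R) (u z : nat -> R) : 0 < g < 1 ->
  (forall k, 0 <= z k) -> (forall k, u k ^+ 2 <= (g ^+ k.+1) ^+ 2 * z k) ->
  ((series_sum u ^+ 2)%:E
   <= (1 - g)^-1%:E * \sum_(0 <= k <oo) (g ^+ k.+1 * z k)%:E)%E.
Proof.
move=> g01 z0 uz; have /andP[g0 g1] := g01.
have c0 : 0 < (1 - g)^-1 by rewrite invr_gt0 subr_gt0.
have gz0 k : (0 <= (g ^+ k.+1 * z k)%:E)%E.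
  by rewrite lee_fin mulr_ge0 ?z0 // exprn_ge0 // ltW.
set V := (\sum_(0 <= k <oo) _)%E.
have V0 : (0 <= V)%E by apply: nneseries_ge0 => k *; exact: gz0.
case Vv: V V0 => [v| |] // V0; last by rewrite gt0_muley ?lte_fin // leey.
have partial_le N : (\sum_(0 <= k < N) u k) ^+ 2 <= (1 - g)^-1 * v.
  apply: (le_trans (sqr_partial_sum_le N g01 uz)); rewrite ler_wpM2l ?(ltW c0) //.
  by rewrite -lee_fin -sumEFin -Vv; apply: nneseries_lim_ge => k *; exact: gz0.
rewrite -EFinM lee_fin /series_sum.
have [cS|dS] := pselect (cvgn (fun N => \sum_(0 <= k < N) u k)); last first.
  by rewrite dvgP // expr0n /= mulr_ge0 ?(ltW c0) // -lee_fin.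
set S := (fun N => _) in cS partial_le *.
have SS : (fun N => S N ^+ 2) @ \oo --> limn S ^+ 2.
  by rewrite expr2; under eq_fun do rewrite expr2; exact: cvgM.
rewrite -(cvg_lim _ SS) //; apply: limr_le; first exact: cvgP SS.
exact: nearW.
Qed.

Section square_integrable_series.
Context d (T : measurableType d) (R : realType) (mu : {measure set T -> \bar R}).

Lemma Lfun2_sqr_integral (f : T -> R) : measurable_fun [set: T] f ->
  (\int[mu]_t ((f t) ^+ 2)%:E < +oo)%E -> f \in Lfun mu 2%:E.
Proof.
move=> mf fi; rewrite inE; apply/andP; split; first by rewrite inE.
rewrite inE /= /finite_norm unlock /Lnorm; apply: poweR_lty.
rewrite (eq_integral (fun x => ((f x) ^+ 2)%:E)) //.
by move=> x _ /=; rewrite powR_mulrn // real_normK ?num_real.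
Qed.

Definition integral_bounded (f : T -> R) (S : R) :=
  [/\ measurable_fun [set: T] f, forall t, 0 <= f t & (\int[mu]_t (f t)%:E <= S%:E)%E].

Lemma integral_bounded_le (f : T -> R) S S' :
  S <= S' -> integral_bounded f S -> integral_bounded f S'.
Proof. by move=> SS' [mf f0 fi]; split => //; apply: le_trans fi _; rewrite lee_fin. Qed.

Lemma integral_bounded_ge0 (f : T -> R) S : integral_bounded f S -> 0 <= S.
Proof.
case=> _ f0 fS; rewrite -lee_fin; apply: le_trans fS.
by apply: integral_ge0 => t _; rewrite lee_fin.
Qed.

Lemma integral_boundedD (f g : T -> R) S1 S2 :
  integral_bounded f S1 -> integral_bounded g S2 ->
  integral_bounded (fun t => f t + g t) (S1 + S2).
Proof.
move=> [mf f0 fi] [mg g0 gi]; split; first exact: measurable_funD.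
  by move=> t; rewrite addr_ge0.
under eq_integral do rewrite EFinD.
rewrite ge0_integralD //; try (by move=> t _; rewrite lee_fin);
  try exact/measurable_EFinP.
by rewrite EFinD leeD.
Qed.

Lemma integral_boundedZ (f : T -> R) a S :
  0 <= a -> integral_bounded f S -> integral_bounded (fun t => a * f t) (a * S).
Proof.
move=> a0 [mf f0 fi]; split.
- by apply: measurable_funM => //; exact: measurable_cst.
- by move=> t; rewrite mulr_ge0.
under eq_integral do rewrite EFinM.
rewrite ge0_integralZl_EFin //; try (by move=> t _; rewrite lee_fin);
  try exact/measurable_EFinP.
by rewrite EFinM lee_wpmul2l ?lee_fin.
Qed.

Lemma integral_bounded_sum (I : Type) (s : seq I) (f : I -> T -> R) (S : I -> R) :
  (forall i, integral_bounded (f i) (S i)) ->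
  integral_bounded (fun t => \sum_(i <- s) f i t) (\sum_(i <- s) S i).
Proof.
move=> fS; elim: s => [|i s IH].
  rewrite big_nil; under eq_fun do rewrite big_nil.
  by split; [exact: measurable_cst|by []|rewrite integral0].
rewrite big_cons; under eq_fun do rewrite big_cons.
exact: integral_boundedD.
Qed.

Lemma integral_geom_series_le (g M : R) (Z : nat -> T -> R) : 0 < g < 1 ->
  (forall k, integral_bounded (Z k) M) ->
  (\int[mu]_t (\sum_(0 <= k <oo) (g ^+ k.+1 * Z k t)%:E) <= ((1 - g)^-1 * M)%:E)%E.
Proof.
move=> /andP[g0 g1] ZM; have gk0 k : 0 <= g ^+ k.+1 by rewrite exprn_ge0 ?ltW.
have gZ k : integral_bounded (fun t => g ^+ k.+1 * Z k t) (g ^+ k.+1 * M).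
  exact: integral_boundedZ.
rewrite integral_nneseries //; first last.
- by move=> k t _; case: (gZ k) => _ + _; rewrite lee_fin.
- by move=> k; case: (gZ k) => + _ _; move/measurable_EFinP.
apply: (@le_trans _ _ (\sum_(0 <= k <oo) ((g ^+ k.+1 * M)%:E))%E).
  apply: lee_nneseries => [k _ _|k _]; case: (gZ k) => // _ gZ0 _.
  by apply: integral_ge0 => t _; rewrite lee_fin.
have M0 := integral_bounded_ge0 (ZM 0%N).
apply: lime_le.
  by apply: is_cvg_nneseries => k _ _; rewrite lee_fin mulr_ge0.
apply: nearW => N /=; rewrite sumEFin lee_fin -mulr_suml ler_wpM2r //.
by apply: geom_partial_le; rewrite ltW.
Qed.

Lemma Lfun2_series_sum (u Z : nat -> T -> R) (g M : R) : 0 < g < 1 ->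
  (forall k, measurable_fun [set: T] (u k)) ->
  (forall k, integral_bounded (Z k) M) ->
  (forall k t, u k t ^+ 2 <= (g ^+ k.+1) ^+ 2 * Z k t) ->
  (fun t => series_sum (u ^~ t)) \in Lfun mu 2%:E.
Proof.
move=> g01 mu_ ZM uZ; have /andP[g0 g1] := g01.
have Z0 k t : 0 <= Z k t by case: (ZM k) => _ + _; apply.
have gZ0 k t : (0 <= (g ^+ k.+1 * Z k t)%:E)%E.
  by rewrite lee_fin mulr_ge0 ?Z0 // exprn_ge0 // ltW.
have mgZ k : measurable_fun [set: T] (EFin \o (fun t => g ^+ k.+1 * Z k t)).
  apply/measurable_EFinP/measurable_funM; first exact: measurable_cst.
  by case: (ZM k).
apply: Lfun2_sqr_integral.
  by apply: measurable_fun_limn => N; apply: measurable_sum => k; exact: mu_.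
have c0 : 0 <= (1 - g)^-1 by rewrite invr_ge0 subr_ge0 ltW.
apply: (@le_lt_trans _ _ ((1 - g)^-1%:E * ((1 - g)^-1 * M)%:E)%E); last first.
  by rewrite -EFinM ltry.
set V := fun t => (\sum_(0 <= k <oo) (g ^+ k.+1 * Z k t)%:E)%E.
have V0 t : (0 <= V t)%E by apply: nneseries_ge0 => k *; exact: gZ0.
have mV : measurable_fun [set: T] V.
  exact: (ge0_emeasurable_sum (fun k t _ _ => gZ0 k t) (fun k _ => mgZ k)).
apply: (@le_trans _ _ ((1 - g)^-1%:E * \int[mu]_t V t)%E).
  rewrite -ge0_integralZl_EFin //; apply: ge0_le_integral => //.
  - by move=> t _; rewrite lee_fin sqr_ge0.
  - apply/measurable_EFinP/measurable_funX.
    by apply: measurable_fun_limn => N; apply: measurable_sum => k; exact: mu_.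
  - exact: measurable_funeM.
  - by move=> t _; exact: sqr_series_sum_le.
by rewrite lee_wpmul2l ?lee_fin // integral_geom_series_le.
Qed.

End square_integrable_series.

Lemma series_sum1E (R : realType) (u : nat -> R) :
  u 0%N = 0 -> series_sum1 u = series_sum u.
Proof.
move=> u0; rewrite /series_sum1 /series_sum; congr (limn _); apply/funext => -[|N].
  by rewrite !big_geq.
by rewrite [RHS]big_ltn // u0 add0r.
Qed.

Section disturbance_series.
Context d (T : measurableType d) (R : realType) (Pr : probability T R) (n : nat).
Variables (w : nat -> T -> 'cV[R]_n) (s4 g : R).
Hypotheses (w_meas : forall k, measurable_coords (w k))
  (w_moment4 : forall k, ('E_Pr[fun t => (vnorm (w k t) ^+ 4)%R] <= s4%:E)%E)
  (g01 : 0 < g < 1).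

Let phi k t := 1 + vnorm (w k t) ^+ 4.

Lemma integral_bounded_phi k : integral_bounded Pr (phi k) (1 + s4).
Proof.
apply: integral_boundedD.
  split; [exact: measurable_cst|by []|].
  by rewrite integral_cst //= probability_setT mule1.
split; first exact: measurable_vnorm_X4.
  by move=> t; exact: exprn_ge0 (vnorm_ge0 _).
by have := w_moment4 k; rewrite unlock.
Qed.

Lemma Lfun2_series_state (AK P : 'M[R]_n) (x : 'cV[R]_n) : specnorm AK <= 1 ->
  (fun t => series_sum (fun k => g ^+ k.+1 * scal ((w k t)^T *m P *m (AK ^+ k.+1 *m x))))
    \in Lfun Pr 2%:E.
Proof.
move=> AK1; set C := (mxl1 P * vnorm x) ^+ 2.
apply: (Lfun2_series_sum (Z := fun k t => C * phi k t) (M := C * (1 + s4)) g01).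
- move=> k; apply: measurable_funM; first exact: measurable_cst.
  by apply: measurable_scal => //; exact: measurable_coords_cst.
- by move=> k; apply: integral_boundedZ; [exact: sqr_ge0|exact: integral_bounded_phi].
move=> k t; rewrite exprMn ler_wpM2l ?sqr_ge0 //.
have scal_le : `|scal ((w k t)^T *m P *m (AK ^+ k.+1 *m x))|
    <= mxl1 P * vnorm x * vnorm (w k t).
  apply: (le_trans (norm_scal_le _ _ _)); rewrite [leRHS]mulrAC ler_wpM2l //.
    by rewrite mulr_ge0 ?mxl1_ge0 ?vnorm_ge0.
  apply: (le_trans (vnorm_mulmxX_specnorm _ _ _)); rewrite ler_piMl ?vnorm_ge0 //.
  by rewrite exprn_ile1 ?specnorm_ge0.
apply: (le_trans (sqr_ler_norm scal_le)).
by rewrite exprMn ler_wpM2l ?sqr_ge0 ?sqr_le_1DX4.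
Qed.

Lemma Lfun2_series_quad (P : 'M[R]_n) :
  (fun t => series_sum (fun k => g ^+ k.+1 * scal ((w k t)^T *m P *m w k t)))
    \in Lfun Pr 2%:E.
Proof.
set C := mxl1 P ^+ 2.
apply: (Lfun2_series_sum (Z := fun k t => C * phi k t) (M := C * (1 + s4)) g01).
- move=> k; apply: measurable_funM; first exact: measurable_cst.
  exact: measurable_scal.
- by move=> k; apply: integral_boundedZ; [exact: sqr_ge0|exact: integral_bounded_phi].
move=> k t; rewrite exprMn ler_wpM2l ?sqr_ge0 //.
apply: (le_trans (sqr_ler_norm (norm_scal_le _ _ _))).
by rewrite -mulrA exprMn ler_wpM2l ?sqr_ge0 // -expr2 -exprM /phi lerDr.
Qed.

Lemma Lfun2_series_cross (AK P : 'M[R]_n) : specnorm AK < 1 ->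
  (fun t => series_sum1 (fun k => g ^+ k.+1 *
     scal ((w k t)^T *m P *m \sum_(0 <= tau < k) AK ^+ (k - tau) *m w tau t)))
    \in Lfun Pr 2%:E.
Proof.
move=> AK1; have AK0 := specnorm_ge0 AK.
set r := (1 + specnorm AK) / 2.
have r0 : 0 < r by rewrite /r; lra.
have r1 : r < 1 by rewrite /r; lra.
have AKr : specnorm AK <= r by rewrite /r; lra.
have r01 : 0 < r < 1 by rewrite r0 r1.
set C := (1 - r)^-1 * mxl1 P ^+ 2.
have C0 : 0 <= C by rewrite mulr_ge0 ?sqr_ge0 // invr_ge0 subr_ge0 ltW.
pose Z k t := C * \sum_(0 <= tau < k) r ^+ (k - tau) * (phi k t + phi tau t).
set S := 1 + s4 + (1 + s4).
have termS k tau : integral_bounded Pr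
    (fun t => r ^+ (k - tau) * (phi k t + phi tau t)) (r ^+ (k - tau) * S).
  apply: integral_boundedZ; first exact: exprn_ge0 (ltW r0).
  exact: integral_boundedD (integral_bounded_phi k) (integral_bounded_phi tau).
have ZM k : integral_bounded Pr (Z k) (C * ((1 - r)^-1 * S)).
  apply: integral_boundedZ => //.
  apply: integral_bounded_le (integral_bounded_sum _ (termS k)).
  rewrite -mulr_suml ler_wpM2r ?geom_partial_rev_le ?(ltW r0) ?r1 //.
  by have s4_0 := integral_bounded_ge0 (integral_bounded_phi 0); rewrite addr_ge0.
pose u k t := g ^+ k.+1 *
  scal ((w k t)^T *m P *m \sum_(0 <= tau < k) AK ^+ (k - tau) *m w tau t).
change ((fun t => series_sum1 (u ^~ t)) \in Lfun Pr 2%:E).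
have -> : (fun t => series_sum1 (u ^~ t)) = fun t => series_sum (u ^~ t).
  by apply/funext => t; rewrite series_sum1E // /u big_geq // mulmx0 /scal mxE mulr0.
apply: (Lfun2_series_sum (Z := Z) g01 _ ZM).
  move=> k; apply: measurable_funM; first exact: measurable_cst.
  apply: measurable_scal => //.
  by apply: measurable_coords_sum => tau; exact: measurable_coords_mulmx.
move=> k t; rewrite /u exprMn ler_wpM2l ?sqr_ge0 //.
apply: (le_trans (sqr_scal_conv_le P (fun j => w j t) k r01 AKr)).
rewrite /Z /C ler_wpM2l // ?mulr_ge0 ?sqr_ge0 ?invr_ge0 ?subr_ge0 ?(ltW r1) //.
apply: ler_sum => tau _; rewrite ler_wpM2l ?exprn_ge0 ?(ltW r0) //.
exact: mul_sqr_le_1DX4.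
Qed.

End disturbance_series.

Unset Implicit Arguments.

Theorem theorem2 (R : realType) (d : measure_display) (T : measurableType d)
  (Pr : probability T R) (n m : nat)
  (A : 'M[R]_n) (B : 'M[R]_(n, m)) (K : 'M[R]_(m, n))
  (Q : 'M[R]_n) (Rc : 'M[R]_m) (gamma : R) (P : 'M[R]_n)
  (D : probability (n.-tuple R) R)
  (w : nat -> T -> 'cV[R]_n) (sigma4 rhoK : R) :
  posdef Q -> posdef Rc -> 0 < gamma < 1 ->
  P = Q + K^T *m Rc *m K + gamma *: ((A + B *m K)^T *m P *m (A + B *m K)) ->
  (forall k, measurable_fun [set: T] (@cv2tuple R n \o w k)) ->
  (forall k (S : set (n.-tuple R)), measurable S ->
      Pr ((@cv2tuple R n \o w k) @^-1` S) = D S) ->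
  mutually_independent Pr w ->
  (forall k (i : 'I_n), ('E_Pr[fun t => w k t i ord0] = 0)%E) ->
  (forall k, ('E_Pr[fun t => (vnorm (w k t) ^+ 4)%R] <= (sigma4 ^+ 4)%:E)%E) ->
  specnorm (A + B *m K) = rhoK -> rhoK < 1 ->
  forall x : 'cV[R]_n,
    let G := fun t => GK (A + B *m K) P gamma x (fun k => w k t) in
    G \in Lfun Pr 2%:E /\ ('V_Pr[G] < +oo)%E.
Proof.
move=> _ _ g01 _ w_tuple _ _ _ w_moment4 <- AK1 x G.
suff G_L2 : G \in Lfun Pr 2%:E by split; last rewrite ltey_eq variance_fin_num.
have w_meas k := measurable_coords_tuple (w_tuple k).
pose AK := A + B *m K.
pose Fs t := series_sum (fun k =>
  gamma ^+ k.+1 * scal ((w k t)^T *m P *m (AK ^+ k.+1 *m x))).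
pose Fq t := series_sum (fun k => gamma ^+ k.+1 * scal ((w k t)^T *m P *m w k t)).
pose Fc t := series_sum1 (fun k => gamma ^+ k.+1 *
  scal ((w k t)^T *m P *m \sum_(0 <= tau < k) AK ^+ (k - tau) *m w tau t)).
have -> : G = cst (scal (x^T *m P *m x)) + 2 \o* Fs + Fq + 2 \o* Fc.
  by apply/funext => t; rewrite /G /GK !fctE /= ![_ * 2]mulrC.
have two1 : 1 <= (2 : R) by rewrite ler1n.
rewrite !rpredD ?Lfun_cst ?Lfun_scale //.
- exact: Lfun2_series_state (ltW AK1).
- exact: Lfun2_series_quad.
- exact: Lfun2_series_cross.
Qed.
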